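(* Consider a uniprocessor preemptive system scheduled by EDF (earliest absolute deadline first), containing an observer task $\tau_o$ and a victim task $\tau_v$ with integer periods $T_o$ and $T_v$, $T_o \neq T_v$, and implicit deadlines (each job arriving at time $a$ has absolute deadline $a$ plus its task's period). If some arrival of $\tau_v$ is observable by $\tau_o$, then $T_o > T_v$. (Equivalently: if $T_o < T_v$, no arrival of $\tau_v$ is observable by $\tau_o$.)
   Context: Time is discrete (integer ticks). A task $\tau_i$ has period $T_i$ (jobs arrive at times $a_i^{k+1}=a_i^k+T_i$) and relative deadline $D_i=T_i$, so the $k$-th job arriving at $a_i^k$ has absolute deadline $d_i^k=a_i^k+T_i$. Under EDF, among ready jobs the one with the smallest absolute deadline has the highest priority (ties broken arbitrarily). Observability: an arrival of $\tau_v$ at time $a_v$ (with deadline $d_v=a_v+T_v$) is observable by $\tau_o$ if $\tau_o$ has lower priority than $\tau_v$ at $a_v$, i.e. there is a job of $\tau_o$ with arrival $a_o \le a_v$ (the job of $\tau_o$ whose period contains $a_v$, $a_o\le a_v<a_o+T_o$) whose absolute deadline satisfies $d_o = a_o+T_o > d_v = a_v + T_v$. *)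

From Stdlib Require Import ZArith.
Open Scope Z_scope.

Record task := Task { period : Z; phase : Z }.

Definition arrival (t : task) (k : nat) : Z := phase t + Z.of_nat k * period t.

Definition abs_deadline (t : task) (k : nat) : Z := arrival t k + period t.

(* Observability: the j-th arrival of the victim v is observable by the
   observer o iff the job of o whose period contains a_v (a_o <= a_v < a_o + T_o)
   has a strictly later absolute deadline than the victim job, i.e. o has
   lower EDF priority than v at a_v. *)
Definition observable (o v : task) (j : nat) : Prop :=
  exists k : nat,
    arrival o k <= arrival v j < arrival o k + period o /\
    abs_deadline o k > abs_deadline v j.

From Stdlib Require Import ZArith Lia.
Open Scope Z_scope.

Lemma observable_period_gt (o v : task) (j : nat) :
  observable o v j -> period o > period v.
Proof.
  intros [k [[arrival_o_le _] deadline_gt]].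
  unfold abs_deadline in deadline_gt.
  lia.
Qed.

Theorem theorem1 (o v : task) :
  0 < period o -> 0 < period v -> period o <> period v ->
  (exists j : nat, observable o v j) ->
  period o > period v.
Proof.
  intros _ _ _ [j obs].
  exact (observable_period_gt o v j obs).
Qed.
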